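(* Let $p\equiv 1\pmod 8$ be a prime, and suppose there is a primitive root $a$ of $\mathbb{F}_p^*$ such that $a(a^2-a+1)\in(\mathbb{F}_p^* )^4=\{x^4:x\in\mathbb{F}_p^*\}$. Let $K_{p+1}$ be the complete graph on vertex set $\mathbb{F}_p\cup\{c\}$, where $c\notin\mathbb{F}_p$ is an extra vertex. Regard $0$ and the nonzero squares of $\mathbb{F}_p$ as ''quadratic residues'', and $c$ and the non-squares of $\mathbb{F}_p^*$ as ''quadratic non-residues''. Then there exists a $1$-factor $F$ of $K_{p+1}$ such that (1) each edge of $F$ joins a quadratic residue and a quadratic non-residue, and (2) the lengths of the edges of $F$ are pairwise distinct.
   Context: A $1$-factor is a perfect matching. For $x\neq y$ in $\mathbb{F}_p$, the length of the edge $\{x,y\}$ is $\ell(x,y)=\{x-y,y-x\}\subset\mathbb{F}_p^*$; every edge $\{c,x\}$ with $x\in\mathbb{F}_p$ is assigned length $\infty$, distinct from all subsets of $\mathbb{F}_p^*$. ''Pairwise distinct lengths'' means no two distinct edges of $F$ have the same length. *)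

From HB Require Import structures.
From mathcomp Require Import all_boot all_order all_algebra.
Set Implicit Arguments. Unset Strict Implicit. Unset Printing Implicit Defensive.
Import GRing.Theory.
Local Open Scope ring_scope.

(* Vertex set of K_{p+1}: F_p together with an extra vertex c = None. *)
Definition vtx (p : nat) : finType := option 'F_p.

Definition qres (p : nat) (v : vtx p) : bool :=
  match v with
  | None => false
  | Some x => [exists y : 'F_p, y * y == x]
  end.

Definition is_edge (p : nat) (e : {set vtx p}) : bool := #|e| == 2%N.

Definition one_factor (p : nat) (F : {set {set vtx p}}) : Prop :=
  (forall e, e \in F -> is_edge e) /\
  (forall v : vtx p, #|[set e in F | v \in e]| = 1%N).

(* Length of an edge: None encodes infinity (edges through c); for an edge
   {x,y} in F_p the length is Some {x - y, y - x}. *)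
Definition edge_length (p : nat) (e : {set vtx p}) : option {set 'F_p} :=
  if None \in e then None
  else Some [set d : 'F_p | [exists x : 'F_p, exists y : 'F_p,
              [&& Some x \in e, Some y \in e, x != y & d == x - y]]].

(* Write p = 8r + 1 and b = -a, again a primitive root, with b^(4r) = -1.  Pair c
   with 0 and the powers of b inside blocks of four consecutive exponents: for
   k = 4t + s with t < r pair s = 0 with 1 and 2 with 3, for t >= r pair 0 with 3
   and 1 with 2.  Paired exponents have opposite parity, so every edge joins a
   square and a non-square.  Since -1 = a^(4r) is a fourth power, the hypothesis
   says that b (b^2 + b + 1) is a fourth power, i.e. b^2 + b + 1 = b^e with
   e = 3 (mod 4).  The edge through b^k then has length +-(b - 1) b^d, where d is
   0 or 2 (mod 4) in the lower half and 1 or 3 (mod 4) in the upper one.  As the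
   sign is absorbed by b^(4r) = -1, the 4r edges through F_p^* thus get the 4r
   distinct lengths indexed by the classes of d modulo 4r. *)

From HB Require Import structures.
From mathcomp Require Import all_boot all_order all_algebra all_field zify ring.
Set Implicit Arguments. Unset Strict Implicit. Unset Printing Implicit Defensive.
Import GRing.Theory.

Local Ltac case_ifs := repeat case: ifP; move=> *.

Lemma eqn_mod_lt3 n x y : x < 3 * n -> y < 3 * n -> x = y %[mod n] ->
  x = y \/ x = y + n \/ x = y + 2 * n \/ y = x + n \/ y = x + 2 * n.
Proof.
wlog le_xy : x y / x <= y.
  move=> hw hx hy hxy; have [le|/ltnW le] := leqP x y; first exact: hw.
  by have := hw y x le hy hx (esym hxy); lia.
move=> hx hy /eqP; rewrite eq_sym eqn_mod_dvd // => /dvdnP[q hq].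
have : q * n < 3 * n by lia.
rewrite ltn_pmul2r; last by lia.
by case: q hq => [|[|[|//]]] hq _; lia.
Qed.

Definition pair_exp (r k : nat) : nat :=
  let t := k %/ 4 in let s := k %% 4 in
  4 * t + (if t < r then (if odd s then s.-1 else s.+1) else 3 - s).

Lemma pair_exp_lt r k : k < 8 * r -> pair_exp r k < 8 * r.
Proof. rewrite /pair_exp; case_ifs; lia. Qed.

Lemma pair_expK r k : k < 8 * r -> pair_exp r (pair_exp r k) = k.
Proof. rewrite /pair_exp; case_ifs; lia. Qed.

Lemma pair_exp_neq r k : pair_exp r k != k.
Proof. rewrite /pair_exp; case_ifs; lia. Qed.

Lemma odd_pair_exp r k : odd (pair_exp r k) = ~~ odd k.
Proof. rewrite /pair_exp; case_ifs; lia. Qed.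

Definition diff_exp (r e k : nat) : nat :=
  4 * (k %/ 4) +
  if k %/ 4 < r then match k %% 4 with 0 => 4 * r | 1 => 0 | 2 => 2 + 4 * r | _ => 2 end
  else match k %% 4 with 0 => e + 4 * r | 1 => 1 + 4 * r | 2 => 1 | _ => e end.

Lemma diff_exp_lt r e k : e < 8 * r -> k < 8 * r -> diff_exp r e k < 3 * (8 * r).
Proof. rewrite /diff_exp; case: (k %% 4) => [|[|[|[|?]]]]; case_ifs; lia. Qed.

Lemma diff_exp_inj r e k1 k2 : e < 8 * r -> e %% 4 = 3 -> k1 < 8 * r -> k2 < 8 * r ->
  diff_exp r e k1 = diff_exp r e k2 %[mod 8 * r] -> k1 = k2.
Proof.
move=> he8 he4 hk1 hk2.
move/(eqn_mod_lt3 (diff_exp_lt he8 hk1) (diff_exp_lt he8 hk2)).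
rewrite /diff_exp.
case E1: (k1 %% 4) => [|[|[|[|?]]]]; case E2: (k2 %% 4) => [|[|[|[|?]]]]; case_ifs; lia.
Qed.

Local Open Scope ring_scope.

Lemma diff_exp_spec (R : comPzRingType) (b : R) r e k :
  b ^+ (4 * r)%N = -1 -> b ^+ 3 - 1 = (b - 1) * b ^+ e ->
  b ^+ k - b ^+ pair_exp r k = (b - 1) * b ^+ diff_exp r e k.
Proof.
move=> b4r /eqP; rewrite subr_eq addrC => /eqP b3.
rewrite /pair_exp /diff_exp.
move: (divn_eq k 4) (ltn_pmod k (isT : (0 < 4)%N)).
move: (k %/ 4)%N (k %% 4)%N => t s -> hs.
rewrite mulnC; move: (4 * t)%N (4 * r)%N b4r => T R4 b4r.
case: s hs => [|[|[|[|//]]]] _; case: ifP => _;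
  rewrite /= ?subn0 ?subn1 ?subn2 ?subnn /= ?addn0 !exprD ?b4r;
  by first [ring | rewrite b3; ring].
Qed.

Lemma prim_root_half (R : idomainType) (z : R) m :
  (2 * m)%N.-primitive_root z -> z ^+ m = -1.
Proof.
move=> hz; have m_gt0 : (0 < m)%N by have := prim_order_gt0 hz; lia.
have : (z ^+ m) ^+ 2 == 1 by rewrite -exprM mulnC prim_expr_order.
rewrite sqrf_eq1 => /orP[|/eqP //].
rewrite -{1}(expr0 z) (eq_prim_root_expr hz) mod0n modn_small ?eqn0Ngt ?m_gt0 //; lia.
Qed.

Lemma prim_root_opp (R : idomainType) (z : R) m :
  (2 * m)%N.-primitive_root z -> ~~ odd m -> (2 * m)%N.-primitive_root (- z).
Proof.
move=> hz m_even.
have -> : - z = z ^+ m.+1 by rewrite exprSr (prim_root_half hz) mulN1r.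
by rewrite prim_root_exp_coprime // coprimeMr coprimen2 coprimeSn /= m_even.
Qed.

Section FiniteFieldLog.

Variables (F : finFieldType) (n : nat) (b : F).
Hypotheses (hF : #|F| = n.+1) (hb : n.-primitive_root b).

Lemma expf_card_pred (y : F) : y != 0 -> y ^+ n = 1.
Proof. by move=> y0; apply: (mulfI y0); rewrite -exprS -hF expf_card mulr1. Qed.

Lemma prim_expr_neq0 k : b ^+ k != 0.
Proof. by rewrite expf_neq0 // (prim_root_eq0 hb) -lt0n (prim_order_gt0 hb). Qed.

Definition dlog (y : F) : nat :=
  if [pick i : 'I_n | b ^+ i == y] is Some i then nat_of_ord i else 0.

Lemma dlog_spec (y : F) : y != 0 -> (dlog y < n)%N /\ b ^+ dlog y = y.
Proof.
move=> y0; rewrite /dlog; case: pickP => [i /eqP -> //|no_i].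
have [i def_y] := prim_rootP hb (expf_card_pred y0).
by have := no_i i; rewrite def_y eqxx.
Qed.

Lemma dlog_expr k : (k < n)%N -> dlog (b ^+ k) = k.
Proof.
move=> lt_kn; have [lt_ln /eqP] := dlog_spec (prim_expr_neq0 k).
by rewrite (eq_prim_root_expr hb) !modn_small // => /eqP.
Qed.

Lemma exists_root_expr m k : (m %| n)%N -> [exists y, y ^+ m == b ^+ k] = (m %| k)%N.
Proof.
move=> dvd_mn; have m_gt0 : (0 < m)%N := dvdn_gt0 (prim_order_gt0 hb) dvd_mn.
apply/existsP/idP => [[y /eqP hy]|/dvdnP[q ->]]; last first.
  by exists (b ^+ q); rewrite -exprM.
have y0 : y != 0.
  by apply: contraNneq (prim_expr_neq0 k) => y0; rewrite -hy y0 expr0n gtn_eqF.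
have [_ def_y] := dlog_spec y0.
move: hy; rewrite -def_y -exprM => /eqP; rewrite (eq_prim_root_expr hb) => /eqP.
move/(congr1 (modn^~ m)); rewrite /= !modn_dvdm // => hmod.
by rewrite /dvdn -hmod modnMl.
Qed.

Lemma exists_sqrt_expr k : ~~ odd n -> [exists y, y * y == b ^+ k] = ~~ odd k.
Proof. by move=> n_even; rewrite -dvdn2 -exists_root_expr ?dvdn2. Qed.

Lemma cube_sub1_factor (w : F) : (4 %| n)%N -> w != 0 ->
  b * (b ^+ 2 + b + 1) = w ^+ 4 ->
  exists e, [/\ (e < n)%N, (e %% 4 = 3)%N & b ^+ 3 - 1 = (b - 1) * b ^+ e].
Proof.
move=> dvd4n w0; set c := b ^+ 2 + b + 1 => hw.
have c0 : c != 0 by apply: contraNneq (expf_neq0 4 w0) => c0; rewrite -hw c0 mulr0.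
have [lt_en def_c] := dlog_spec c0.
have : (4 %| (dlog c).+1)%N.
  by rewrite -exists_root_expr //; apply/existsP; exists w; rewrite -hw -{1}def_c -exprS.
exists (dlog c); split => //; first by lia.
by rewrite def_c /c; ring.
Qed.

End FiniteFieldLog.

Section Partner.

Variables (F : finFieldType) (r e : nat) (b : F).
Hypotheses (hF : #|F| = (8 * r).+1) (hb : (8 * r).-primitive_root b).
Hypotheses (he8 : (e < 8 * r)%N) (he4 : (e %% 4 = 3)%N).
Hypothesis he3 : b ^+ 3 - 1 = (b - 1) * b ^+ e.

Definition partner (y : F) : F := b ^+ pair_exp r (dlog (8 * r) b y).

Lemma partner_neq0 y : partner y != 0.
Proof. exact: prim_expr_neq0 hb _. Qed.

Lemma partnerK y : y != 0 -> partner (partner y) = y.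
Proof.
move=> y0; have [lt_k def_y] := dlog_spec hF hb y0.
by rewrite /partner (dlog_expr hF hb) ?pair_exp_lt // pair_expK.
Qed.

Lemma partner_neq y : y != 0 -> partner y != y.
Proof.
move=> y0; have [lt_k def_y] := dlog_spec hF hb y0.
by rewrite /partner -{2}def_y (eq_prim_root_expr hb) !modn_small ?pair_exp_lt ?pair_exp_neq.
Qed.

Lemma square_partner y : y != 0 ->
  [exists z, z * z == partner y] = ~~ [exists z, z * z == y].
Proof.
move=> y0; have [_ def_y] := dlog_spec hF hb y0.
have n_even : ~~ odd (8 * r) by rewrite oddM.
by rewrite /partner -{2}def_y !(exists_sqrt_expr hF hb) // odd_pair_exp.
Qed.

Lemma sub_partner y : y != 0 ->
  y - partner y = (b - 1) * b ^+ diff_exp r e (dlog (8 * r) b y).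
Proof.
move=> y0; have [_ def_y] := dlog_spec hF hb y0.
have b4r : b ^+ (4 * r) = -1 by apply: prim_root_half; rewrite mulnA.
by rewrite -{1}def_y -diff_exp_spec.
Qed.

Lemma sub_partner_inj y1 y2 : y1 != 0 -> y2 != 0 ->
  y1 - partner y1 = y2 - partner y2 -> y1 = y2.
Proof.
have b1 : b - 1 != 0.
  have r_gt0 : (0 < r)%N by have := prim_order_gt0 hb; lia.
  rewrite subr_eq0 -{1}(expr1 b) -(expr0 b) (eq_prim_root_expr hb).
  by rewrite mod0n modn_small //; lia.
move=> y10 y20.
have [lt1 def_y1] := dlog_spec hF hb y10; have [lt2 def_y2] := dlog_spec hF hb y20.
rewrite !sub_partner // => /(mulfI b1) /eqP.
rewrite (eq_prim_root_expr hb) => /eqP /(diff_exp_inj he8 he4 lt1 lt2) eq_k.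
by rewrite -def_y1 -def_y2 eq_k.
Qed.

End Partner.

Definition matching_of (p : nat) (g : vtx p -> vtx p) : {set {set vtx p}} :=
  [set [set v; g v] | v : vtx p].

Lemma one_factor_involution (p : nat) (g : vtx p -> vtx p) :
  involutive g -> (forall v, g v != v) -> one_factor (matching_of g).
Proof.
move=> gK g_neq; split=> [e /imsetP[v _ ->]|v].
  by rewrite /is_edge cards2 (eq_sym v) g_neq.
apply/eqP/cards1P; exists [set v; g v]; apply/setP => e; rewrite !inE.
apply/andP/eqP => [[/imsetP[w _ ->] /set2P[->|->]] //|->].
  by rewrite gK setUC.
by split; [apply/imsetP; exists v | rewrite !inE eqxx].
Qed.

Lemma edge_length_Fp (p : nat) (x y : 'F_p) : x != y ->
  edge_length [set Some x; Some y] = Some [set x - y; y - x].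
Proof.
move=> neq_xy; rewrite /edge_length !inE /=; congr Some; apply/setP => d.
rewrite !inE; apply/existsP/orP => [[x' /existsP[y' /and4P[]]]|[/eqP->|/eqP->]].
- rewrite !inE !(inj_eq (@Some_inj _)) => /orP[]/eqP-> /orP[]/eqP->;
    rewrite ?eqxx // => _ ->; by [left | right].
- by exists x; apply/existsP; exists y; rewrite !inE !eqxx /= orbT andbT.
- by exists y; apply/existsP; exists x; rewrite !inE !eqxx /= orbT andbT eq_sym.
Qed.

Section ExtendByC.

Variables (p : nat) (f : 'F_p -> 'F_p).
Hypotheses (f_neq0 : forall y, y != 0 -> f y != 0) (fK : forall y, y != 0 -> f (f y) = y).
Hypothesis f_neq : forall y, y != 0 -> f y != y.

Definition extc (v : vtx p) : vtx p :=
  if v is Some y then (if y == 0 then None else Some (f y)) else Some 0.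

Lemma extcK : involutive extc.
Proof.
case=> [y|] //=; have [-> //|y0 /=] := eqVneq y 0.
by rewrite (negbTE (f_neq0 y0)) fK.
Qed.

Lemma extc_neq v : extc v != v.
Proof.
case: v => [y|] //=; have [//|y0] := eqVneq y 0.
by rewrite (inj_eq (@Some_inj _)) f_neq.
Qed.

Lemma extc_edge v : [set v; extc v] = [set None; Some 0] \/
  exists2 y, y != 0 & [set v; extc v] = [set Some y; Some (f y)].
Proof.
case: v => [y|]; last by left.
rewrite /extc; have [->|y0] := eqVneq y 0; first by left; rewrite setUC.
by right; exists y.
Qed.

Lemma matching_extc_qres : (forall y, y != 0 -> qres (Some (f y)) = ~~ qres (Some y)) ->
  forall e, e \in matching_of extc -> exists u v, [/\ u \in e, v \in e, qres u & ~~ qres v].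
Proof.
move=> f_qres e /imsetP[v _ ->].
have qres_extc : qres (extc v) = ~~ qres v.
  have qres0 : qres (Some (0 : 'F_p)) by apply/existsP; exists 0; rewrite mul0r.
  case: v => [y|]; last exact: qres0.
  rewrite /extc; have [->|y0] := eqVneq y 0; first by rewrite qres0.
  exact: f_qres.
have [qv|nqv] := boolP (qres v).
  by exists v, (extc v); rewrite !inE !eqxx orbT qres_extc qv.
by exists (extc v), v; rewrite !inE !eqxx orbT qres_extc.
Qed.

Lemma matching_extc_lengths :
  (forall y1 y2, y1 != 0 -> y2 != 0 -> y1 - f y1 = y2 - f y2 -> y1 = y2) ->
  {in matching_of extc &, injective (@edge_length p)}.
Proof.
move=> sub_f_inj _ _ /imsetP[v1 _ ->] /imsetP[v2 _ ->].
have length_c : edge_length [set None; Some (0 : 'F_p)] = None.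
  by rewrite /edge_length !inE eqxx.
have length_y y : y != 0 ->
    edge_length [set Some y; Some (f y)] = Some [set y - f y; f y - y].
  by move=> y0; rewrite edge_length_Fp // eq_sym f_neq.
case: (extc_edge v1) => [->|[y1 y10 ->]]; case: (extc_edge v2) => [->|[y2 y20 ->]] //;
  rewrite ?length_c ?length_y // => -[eq_len].
have : y1 - f y1 \in [set y2 - f y2; f y2 - y2] by rewrite -eq_len !inE eqxx.
case/set2P => [/sub_f_inj -> //|].
rewrite -{2}(fK y20) => /sub_f_inj ->; rewrite ?f_neq0 ?fK //.
by rewrite setUC.
Qed.

End ExtendByC.

Theorem proposition2p1 (p : nat) (hp : prime p) (hp8 : (p %% 8 = 1)%N)
  (a : 'F_p) (ha : (p.-1).-primitive_root a)
  (h4 : exists x : 'F_p, x != 0 /\ a * (a ^+ 2 - a + 1) = x ^+ 4) :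
  exists F : {set {set vtx p}},
    one_factor F /\
    (forall e, e \in F -> exists u v, [/\ u \in e, v \in e, qres u & ~~ qres v]) /\
    {in F &, injective (@edge_length p)}.
Proof.
set r := (p %/ 8)%N.
have n_eq : p.-1 = (8 * r)%N by rewrite /r; have := divn_eq p 8; lia.
have hF : #|'F_p| = (8 * r).+1 by rewrite card_Fp // -n_eq prednK ?prime_gt0.
have ha8 : (8 * r).-primitive_root a by rewrite -n_eq.
have double_4r : (8 * r = 2 * (4 * r))%N by rewrite mulnA.
have a4r : a ^+ (4 * r) = -1 by apply: prim_root_half; rewrite -double_4r.
have hb : (8 * r).-primitive_root (- a).
  by rewrite double_4r prim_root_opp -?double_4r ?oddM.
have [x [x0 hx]] := h4.
have hw : - a * ((- a) ^+ 2 + - a + 1) = (a ^+ r * x) ^+ 4.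
  by rewrite exprMn -exprM mulnC a4r -hx; ring.
have dvd4 : (4 %| 8 * r)%N by rewrite dvdn_mulr.
have w0 : a ^+ r * x != 0 by rewrite mulf_neq0 ?(prim_expr_neq0 ha8).
have [e [he8 he4 he3]] := cube_sub1_factor hF hb dvd4 w0 hw.
pose f := partner r (- a).
have f_neq0 y : y != 0 -> f y != 0 by move=> _; apply: partner_neq0 hb y.
have fK := partnerK hF hb; have f_neq := partner_neq hF hb.
exists (matching_of (extc f)); split; last split.
- exact: one_factor_involution (extcK f_neq0 fK) (extc_neq f_neq).
- by apply: matching_extc_qres => y y0; rewrite /qres (square_partner hF hb).
- exact: matching_extc_lengths f_neq0 fK f_neq (sub_partner_inj hF hb he8 he4 he3).
Qed.
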